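(* Let $mG$ be a finite canonical misinformation game, $\Gamma=(\mathcal{AD}^*(\{mG\}),E)$ its adaptation graph, $\Gamma'$ its loopless version, and let $K=\{mG'\in\mathcal{AD}^*(\{mG\}): d^+_{\Gamma'}(mG')=0\}$ be the set of sink nodes of $\Gamma'$. Then $K\subseteq\mathcal{T}$, where $\mathcal{T}$ is the terminal set of the Adaptation Procedure on $mG$. Moreover, every natural misinformed equilibrium of any $mG'\in K$ is a stable misinformed equilibrium of $mG$.
   Context: A normal-form game is $G=\langle N,S,P\rangle$ with finite players $N$, finite pure strategy sets $S_i$, positions $S=\times_i S_i$, payoffs $P_i:S\to\mathbb{R}$. A misinformation game $mG=\langle G^0,G^1,\dots,G^{|N|}\rangle$ consists of the actual game $G^0$ and subjective games $G^i$; it is canonical if all $G^i=\langle N,S,P^i\rangle$ differ from $G^0$ only in payoffs and in every $G^i$ all players have equally many pure strategies. $NME(mG)$ (natural misinformed equilibria) is the set of profiles $\sigma=(\sigma_1,\dots,\sigma_{|N|})$ such that each $\sigma_i$ is player $i$'s component of some Nash equilibrium of $G^i$. $\chi(\sigma)=\mathrm{supp}(\sigma_1)\times\dots\times\mathrm{supp}(\sigma_{|N|})$. For $\vec v\in S$, $mG_{\vec v}$ is obtained by replacing, in every $P^i$ ($i\ge1$), the payoff vector at position $\vec v$ by $P^0(\vec v)$. For a set $M$ of misinformation games, $\mathcal{AD}(M)=\{mG_{\vec u}: mG\in M,\sigma\in NME(mG),\vec u\in\chi(\sigma)\}$, $\mathcal{AD}^{(0)}(M)=M$, $\mathcal{AD}^{(t+1)}(M)=\mathcal{AD}^{(t)}(\mathcal{AD}(M))$,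 $\mathcal{AD}^*(M)=\bigcup_{t\ge0}\mathcal{AD}^{(t)}(M)$; the length $\mathfrak{L}$ is the least $t\ge0$ with $\mathcal{AD}^{(t+1)}(M)=\mathcal{AD}^{(t)}(M)$ and $\mathcal{AD}^\infty(M)=\mathcal{AD}^{(\mathfrak{L})}(M)$. The terminal set is $\mathcal{T}=\{mG'\in\mathcal{AD}^*(\{mG\}): mG'\in\mathcal{AD}(\{mG'\})\}$. A profile $\sigma$ is a stable misinformed equilibrium of $mG$ if there is $\widehat{mG}\in\mathcal{AD}^\infty(\{mG\})$ with $\sigma\in NME(\widehat{mG})$ and $\widehat{mG}_{\vec v}=\widehat{mG}$ for all $\vec v\in\chi(\sigma)$. The adaptation graph $\Gamma$ has vertex set $\mathcal{AD}^*(\{mG\})$ and an edge $(mG^1,mG^2)$ iff $mG^2=(mG^1)_{\vec v}$ for some $\sigma\in NME(mG^1)$, $\vec v\in\chi(\sigma)$; $\Gamma'$ is $\Gamma$ with self-loops removed; $d^+_{\Gamma'}$ denotes out-degree in $\Gamma'$. *)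

From HB Require Import structures.
From mathcomp Require Import all_boot all_order all_algebra.
From mathcomp Require Import reals.
Set Implicit Arguments. Unset Strict Implicit. Unset Printing Implicit Defensive.
Import Order.TTheory GRing.Theory Num.Theory.
Local Open Scope ring_scope.

Section MisinformationGames.
Variable R : realType.
Variable n : nat.
Variable S : 'I_n -> finType.

Definition pos := {dffun forall i : 'I_n, S i}.
Definition payoff := {ffun pos -> {ffun 'I_n -> R}}.

(* A canonical misinformation game: actual game G^0 and subjective games
   G^i (i in N), all with the same players and strategy sets. *)
Record mgame := MGame { actual : payoff; subj : {ffun 'I_n -> payoff} }.

Definition mixed (T : finType) (x : {ffun T -> R}) :=
  (forall a, 0 <= x a) /\ \sum_a x a = 1.
Definition profile := forall i : 'I_n, {ffun S i -> R}.
Definition is_profile (sg : profile) := forall i, mixed (sg i).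

Definition EU (P : payoff) (sg : profile) (j : 'I_n) : R :=
  \sum_(s : pos) (\prod_(i : 'I_n) sg i (s i)) * P s j.
Definition EUdev (P : payoff) (sg : profile) (j : 'I_n) (tau : {ffun S j -> R}) : R :=
  \sum_(s : pos) (tau (s j) * \prod_(i : 'I_n | i != j) sg i (s i)) * P s j.

Arguments EUdev P sg j tau : clear implicits.

Definition Nash (P : payoff) (sg : profile) :=
  is_profile sg /\
  forall j (tau : {ffun S j -> R}), mixed tau -> EUdev P sg j tau <= EU P sg j.

Definition NME (g : mgame) (sg : profile) :=
  forall i, exists tau, Nash (subj g i) tau /\ tau i = sg i.

Definition chi (sg : profile) (v : pos) := forall i, 0 < sg i (v i).

Definition adapt (g : mgame) (v : pos) : mgame :=
  MGame (actual g)
        [ffun i => [ffun s => if s == v then actual g v else subj g i s]].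

Definition gset := mgame -> Prop.

Definition AD (M : gset) : gset :=
  fun g' => exists g sg v, [/\ M g, NME g sg, chi sg v & g' = adapt g v].

Fixpoint ADn (t : nat) (M : gset) : gset :=
  match t with 0 => M | t'.+1 => ADn t' (AD M) end.

Definition ADstar (M : gset) : gset := fun g => exists t, ADn t M g.

Definition set_eq (A B : gset) := forall g, A g <-> B g.

Definition is_length (M : gset) (L : nat) :=
  set_eq (ADn L.+1 M) (ADn L M) /\
  forall t, (t < L)%N -> ~ set_eq (ADn t.+1 M) (ADn t M).

Definition ADinf (M : gset) : gset :=
  fun g => exists L, is_length M L /\ ADn L M g.

Definition single (g0 : mgame) : gset := fun g => g = g0.

Definition terminal (g0 : mgame) : gset :=
  fun g => ADstar (single g0) g /\ AD (single g) g.

Definition stable (g0 : mgame) (sg : profile) :=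
  exists gh, [/\ ADinf (single g0) gh, NME gh sg &
                 forall v, chi sg v -> adapt gh v = gh].

Definition edge (g1 g2 : mgame) :=
  exists sg v, [/\ NME g1 sg, chi sg v & g2 = adapt g1 v].

(* sink nodes of Gamma' (Gamma without self-loops): out-degree 0 in Gamma' *)
Definition sink (g0 : mgame) : gset :=
  fun g => ADstar (single g0) g /\
           ~ (exists g2, [/\ ADstar (single g0) g2, edge g g2 & g2 <> g]).

End MisinformationGames.

From mathcomp Require Import all_boot all_order all_algebra all_fingroup.
From mathcomp Require Import reals boolp classical_sets topology normedtype sequences.
From mathcomp Require Import zify lra.
Set Implicit Arguments. Unset Strict Implicit. Unset Printing Implicit Defensive.
Import Order.TTheory GRing.Theory Num.Theory.
Import numFieldNormedType.Exports.

(* A sink g of the loopless adaptation graph has no edge to another game, so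
   adapting g at any position in the support of one of its natural
   misinformed equilibria gives back g.  Every subjective game has a Nash
   equilibrium, hence g has such an equilibrium and thus a self-loop, i.e. g
   is terminal.  Along every edge that is not a loop, the set of positions
   where all subjective payoffs agree with the actual ones grows strictly;
   so AD^(t)({g0}) is constant from t = |S| + 1 on and the length L exists.
   As g carries a loop and lies in some AD^(t)({g0}), it lies in all later
   stages, in particular in AD^(L)({g0}).

   Nash's theorem comes from Brouwer's fixed point theorem on a cube, applied
   to Nash's improvement map composed with a retraction of the cube onto the
   mixed profiles.  Brouwer's theorem follows from Kuhn's cubical Sperner
   lemma by sequential compactness, and Kuhn's lemma from the parity argument
   on the doors of Kuhn's triangulation. *)

(** * Kuhn's cubical Sperner lemma *)

Lemma odd_card_involution (T : finType) (f : T -> T) (A : {set T}) :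
  {in A, forall x, f x \in A} -> {in A, involutive f} ->
  odd #|A| = odd #|[set x in A | f x == x]|.
Proof.
elim: {A}_.+1 {-2}A (ltnSn #|A|) => // k IH A ltA fA ffA.
case: (pickP [pred x in A | f x != x]) => [x /andP[/= xA fx]|nofix]; last first.
  congr odd; apply: eq_card => x; rewrite inE; case xA: (x \in A) => //=.
  by have := nofix x; rewrite /= xA /= => /negbFE ->.
set A' := A :\ x :\ f x.
have fxA := fA x xA.
have cardA : #|A| = #|A'|.+2.
  by rewrite /A' (cardsD1 x A) xA (cardsD1 (f x) (A :\ x)) !inE fx fxA.
have A'E y : y \in A' = [&& y != f x, y != x & y \in A] by rewrite !inE.
have fA' : {in A', forall y, f y \in A'}.
  move=> y; rewrite !A'E => /and3P[yfx yx yA]; rewrite fA // andbT.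
  apply/andP; split.
    by apply: contra yx => /eqP e; rewrite -(ffA y yA) e ffA.
  by apply: contra yfx => /eqP e; rewrite -e ffA.
have ffA' : {in A', involutive f}.
  by move=> y; rewrite A'E => /and3P[_ _ yA]; apply: ffA.
have ltA' : #|A'| < k by move: ltA; rewrite cardA; lia.
rewrite cardA /= negbK (IH A' ltA' fA' ffA').
congr odd; apply: eq_card => y; rewrite !inE.
case: (eqVneq y x) => [->|yx]; first by rewrite (negbTE fx) !andbF.
case: (eqVneq y (f x)) => [->|yfx]; last by [].
by rewrite ffA // eq_sym (negbTE fx) !andbF.
Qed.

Lemma onto_iota_inj (T : finType) (A : {set T}) (h : T -> nat) c :
  #|A| = c -> (forall l, l < c -> exists2 x, x \in A & h x = l) ->
  {in A &, injective h}.
Proof.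
move=> cA onto; apply/dinjectiveP; rewrite /dinjectiveb.
apply: (@leq_size_uniq _ (iota 0 c)); first exact: iota_uniq.
  move=> l; rewrite mem_iota add0n => /onto[x xA <-].
  by apply: map_f; rewrite mem_enum.
by rewrite size_map size_iota -cardE cA.
Qed.

Section KuhnTriangulation.
Variable K : nat.
Local Notation N := K.+1.

(* Kuhn's triangulation of the grid {0..N}^m: the simplex (b, r) has the
   vertices v_j = b + sum of the unit vectors e_i with r i < j, j <= m. *)
Definition ksimplex m := ({ffun 'I_m -> 'I_N} * {perm 'I_m})%type.

Definition kvertex m (s : ksimplex m) (j : 'I_m.+1) : {ffun 'I_m -> nat} :=
  [ffun i => s.1 i + (s.2 i < j)].

Definition in_grid m (x : {ffun 'I_m -> nat}) := forall i, x i <= N.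

Definition sperner_labelling m (lab : {ffun 'I_m -> nat} -> nat) :=
  [/\ forall x, in_grid x -> lab x <= m,
      forall x i, in_grid x -> x i = 0 -> lab x != i.+1 &
      forall x i, in_grid x -> x i = N -> lab x != 0].

Definition fully_labelled m (lab : {ffun 'I_m -> nat} -> nat) (s : ksimplex m) :=
  [forall l : 'I_m.+1, [exists j, lab (kvertex s j) == l]].

Lemma kvertex_in_grid m (s : ksimplex m) j : in_grid (kvertex s j).
Proof.
move=> i; rewrite ffunE; have := ltn_ord (s.1 i).
have : nat_of_bool (s.2 i < j) <= 1 by case: (_ < _).
lia.
Qed.

Lemma fully_labelled_inj m lab (s : ksimplex m) :
  sperner_labelling lab -> fully_labelled lab s ->
  injective (fun j => lab (kvertex s j)).
Proof.
move=> [lab_le _ _] /forallP full j1 j2 e.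
apply: (@onto_iota_inj _ [set: 'I_m.+1] (fun j => lab (kvertex s j)) m.+1) => //.
  by rewrite cardsT card_ord.
move=> l ll; have /existsP[j /eqP e'] := full (Ordinal ll).
by exists j.
Qed.

Section DimensionStep.
Variable m : nat.
Variable lab : {ffun 'I_m.+1 -> nat} -> nat.
Hypothesis lab_sperner : sperner_labelling lab.

(* A facet is represented by a simplex together with the opposite vertex. *)
Definition door (s : ksimplex m.+1) (j : 'I_m.+2) :=
  [forall l : 'I_m.+1, [exists k : 'I_m.+1, lab (kvertex s (lift j k)) == l]].

Definition doors := [set p : ksimplex m.+1 * 'I_m.+2 | door p.1 p.2].

Lemma doorP s j :
  reflect (forall l : 'I_m.+1, exists2 k, k != j & lab (kvertex s k) = l) (door s j).
Proof.
apply: (iffP forallP) => [D l|D l].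
  have /existsP[k /eqP e] := D l.
  by exists (lift j k) => //; rewrite eq_sym neq_lift.
have [k kj e] := D l; case: (unliftP j k) kj e => [k' -> _ e|->]; last by rewrite eqxx.
by apply/existsP; exists k'; rewrite e.
Qed.

Lemma door_inj s j :
  door s j -> {in [set~ j] &, injective (fun k => lab (kvertex s k))}.
Proof.
move=> /doorP D; apply: (@onto_iota_inj _ _ _ m.+1); first by rewrite cardsC1 card_ord.
by move=> l ll; have [k kj e] := D (Ordinal ll); exists k; rewrite ?inE.
Qed.

Lemma door_twin s j k :
  door s j -> k != j -> lab (kvertex s k) = lab (kvertex s j) -> door s k.
Proof.
move=> /doorP D kj e; apply/doorP => l.
have [k1 k1j e1] := D l.
case: (eqVneq k1 k) => [ek|k1k]; last by exists k1.
by exists j; [rewrite eq_sym|rewrite -e -ek].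
Qed.

(* A door of a simplex that is not fully labelled repeats exactly one label;
   excluding the other vertex with that label gives its other door. *)
Definition door_swap (p : ksimplex m.+1 * 'I_m.+2) : ksimplex m.+1 * 'I_m.+2 :=
  if [pick k | (k != p.2) && (lab (kvertex p.1 k) == lab (kvertex p.1 p.2))]
  is Some k then (p.1, k) else p.

Lemma door_swap_door : {in doors, forall p, door_swap p \in doors}.
Proof.
case=> s j; rewrite /door_swap inE /= => D.
case: pickP => [k /andP[kj /eqP e]|_]; last by rewrite inE.
by rewrite inE /=; apply: door_twin D kj e.
Qed.

Lemma door_swapK : {in doors, involutive door_swap}.
Proof.
case=> s j; rewrite inE /= => D; rewrite {2}/door_swap /=.
case: pickP => [k /andP[kj /eqP e]|nok] /=; last first.
  by rewrite /door_swap /=; case: pickP => // k; rewrite nok.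
rewrite /door_swap /=.
have Dk := door_twin D kj e.
case: pickP => [k2 /andP[k2k /eqP e2]|nok2] /=; last first.
  by have := nok2 j; rewrite eq_sym kj e eqxx.
congr (_, _); apply: (door_inj Dk); rewrite ?inE ?k2k 1?eq_sym ?kj //.
by rewrite e2 e.
Qed.

Lemma door_top_label s j :
  door s j -> (forall k, k != j -> lab (kvertex s k) != lab (kvertex s j)) ->
  lab (kvertex s j) = m.+1.
Proof.
have [lab_le _ _] := lab_sperner; move=> /doorP D uniq_j.
have := lab_le _ (kvertex_in_grid s j); rewrite leq_eqVlt => /orP[/eqP //|lt].
have [k kj e] := D (Ordinal lt).
by have := uniq_j k kj; rewrite e eqxx.
Qed.

Lemma door_swap_fixed : [set p in doors | door_swap p == p] =
  [set p : ksimplex m.+1 * 'I_m.+2 |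
    fully_labelled lab p.1 && (lab (kvertex p.1 p.2) == m.+1)].
Proof.
apply/setP => -[s j]; rewrite !inE /= /door_swap /=; apply/idP/idP.
  case/andP => D; case: pickP => [k /andP[kj _] /eqP [] /eqP|nok _].
    by rewrite (negbTE kj).
  have top : lab (kvertex s j) = m.+1.
    by apply: door_top_label => // k kj; have := nok k; rewrite kj => /negbT.
  have /doorP D' := D.
  rewrite top eqxx andbT; apply/forallP => l.
  case: (ltnP l m.+1) => [ll|].
    by have [k _ e] := D' (Ordinal ll); apply/existsP; exists k; rewrite e.
  have := ltn_ord l; rewrite ltnS => a b.
  by apply/existsP; exists j; rewrite top eqn_leq a b.
case/andP => full /eqP top.
have D : door s j.
  apply/doorP => l.
  have /existsP[k /eqP e] := (forallP full) (widen_ord (leqnSn _) l).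
  exists k => //; apply/eqP => kj; move: e; rewrite kj top /= => e.
  by have := ltn_ord l; rewrite -e ltnn.
rewrite D /=; case: pickP => // k /andP[kj /eqP e].
by move: kj; rewrite (fully_labelled_inj lab_sperner full e) eqxx.
Qed.

Lemma card_door_swap_fixed :
  #|[set p in doors | door_swap p == p]| = #|[set s | fully_labelled lab s]|.
Proof.
rewrite door_swap_fixed.
pose top_door (s : ksimplex m.+1) :=
  (s, odflt ord0 [pick j | lab (kvertex s j) == m.+1]).
suff -> : [set p : ksimplex m.+1 * 'I_m.+2 |
            fully_labelled lab p.1 && (lab (kvertex p.1 p.2) == m.+1)]
   = [set top_door s | s in [set s | fully_labelled lab s]].
  by rewrite card_imset // => s1 s2 [].
apply/setP => -[s j]; rewrite !inE /=; apply/idP/imsetP.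
  case/andP => full /eqP top; exists s; rewrite ?inE //.
  rewrite /top_door; case: pickP => [j' /eqP e|/(_ j)]; last by rewrite top eqxx.
  by rewrite /= (fully_labelled_inj lab_sperner full (etrans e (esym top))).
case=> s' full'; rewrite inE in full'; rewrite /top_door => -[-> ->]; rewrite full' /=.
case: pickP => [j' /eqP -> //|no].
have /existsP[j' /eqP e] := (forallP full') ord_max.
by have := no j'; rewrite e eqxx.
Qed.

Definition rotL : {perm 'I_m.+1} := perm (can_inj (@ord_predK m.+1)).
Definition rotR : {perm 'I_m.+1} := perm (can_inj (@ordSK m.+1)).

Lemma rotLE (x : 'I_m.+1) : (rotL x : nat) = if x == ord0 then m else x.-1.
Proof.
rewrite permE /=; case: (eqVneq x ord0) => [->|x0] /=; first by rewrite modn_small.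
have xp : 0 < x by rewrite lt0n; apply: contra x0 => /eqP e; apply/eqP/val_inj.
have -> : (x + m.+1).-1 = x.-1 + m.+1 by lia.
by rewrite modnDr modn_small //; have := ltn_ord x; lia.
Qed.

Lemma rotRE (x : 'I_m.+1) : (rotR x : nat) = if x == ord_max then 0 else x.+1.
Proof.
rewrite permE /=; case: (eqVneq x ord_max) => [->|xm] /=; first by rewrite modnn.
rewrite modn_small //; have := ltn_ord x; rewrite ltnS leq_eqVlt => /orP[/eqP e|//].
by case/eqP: xm; apply/val_inj.
Qed.

Lemma rotLK : (rotL * rotR = 1)%g.
Proof. by apply/permP => x; rewrite permM perm1 !permE /= ord_predK. Qed.

Lemma rotRK : (rotR * rotL = 1)%g.
Proof. by apply/permP => x; rewrite permM perm1 !permE /= ordSK. Qed.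

Definition incr_coord (b : {ffun 'I_m.+1 -> 'I_N}) c : {ffun 'I_m.+1 -> 'I_N} :=
  [ffun i => if i == c then inord (b c).+1 else b i].

Definition decr_coord (b : {ffun 'I_m.+1 -> 'I_N}) c : {ffun 'I_m.+1 -> 'I_N} :=
  [ffun i => if i == c then inord (b c).-1 else b i].

Lemma incr_coordK (b : {ffun 'I_m.+1 -> 'I_N}) c :
  (b c).+1 < N -> decr_coord (incr_coord b c) c = b.
Proof.
move=> lt; apply/ffunP => i; rewrite !ffunE; case: (eqVneq i c) => [->|//].
by rewrite eqxx inordK //= inord_val.
Qed.

Lemma decr_coordK (b : {ffun 'I_m.+1 -> 'I_N}) c :
  0 < b c -> incr_coord (decr_coord b c) c = b.
Proof.
move=> lt; apply/ffunP => i; rewrite !ffunE; case: (eqVneq i c) => [->|//].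
rewrite eqxx inordK /=; last by have := ltn_ord (b c); lia.
by rewrite prednK // inord_val.
Qed.

Definition swap_adj (j : 'I_m.+2) : {perm 'I_m.+1} := tperm (inord j.-1) (inord j).

(* Cross the facet opposite to the vertex p.2 into the adjacent simplex of
   the triangulation, and make the newly acquired vertex the door's vertex;
   a facet on the boundary of the grid is left fixed. *)
Definition pivot (p : ksimplex m.+1 * 'I_m.+2) : ksimplex m.+1 * 'I_m.+2 :=
  if p.2 == ord0 then
    (if (p.1.1 (p.1.2^-1 ord0)%g).+1 < N then
       ((incr_coord p.1.1 (p.1.2^-1 ord0)%g, (p.1.2 * rotL)%g), ord_max) else p)
  else if p.2 == ord_max then
    (if 0 < p.1.1 (p.1.2^-1 ord_max)%g then
       ((decr_coord p.1.1 (p.1.2^-1 ord_max)%g, (p.1.2 * rotR)%g), ord0) else p)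
  else ((p.1.1, (p.1.2 * swap_adj p.2)%g), p.2).

Lemma kvertex_pivot_first (s : ksimplex m.+1) : (s.1 (s.2^-1 ord0)%g).+1 < N ->
  forall k : 'I_m.+1,
  kvertex (incr_coord s.1 (s.2^-1 ord0)%g, (s.2 * rotL)%g) (lift ord_max k) =
  kvertex s (lift ord0 k).
Proof.
move=> lt k; apply/ffunP => i; rewrite !ffunE permM lift_max lift0 rotLE /=.
have kl := ltn_ord k.
case: (eqVneq i (s.2^-1 ord0)%g) => [->|ic].
  rewrite permKV eqxx inordK // /=.
  have -> : (m < k) = false by apply/negbTE; rewrite -leqNgt -ltnS.
  by rewrite addn0 addn1.
have ri : s.2 i != ord0 by apply: contra ic => /eqP <-; rewrite permK.
rewrite (negbTE ri); congr (_ + nat_of_bool _).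
have : 0 < s.2 i by rewrite lt0n; apply: contra ri => /eqP e; apply/eqP/val_inj.
by move=> h; apply/idP/idP; lia.
Qed.

Lemma kvertex_pivot_last (s : ksimplex m.+1) : 0 < s.1 (s.2^-1 ord_max)%g ->
  forall k : 'I_m.+1,
  kvertex (decr_coord s.1 (s.2^-1 ord_max)%g, (s.2 * rotR)%g) (lift ord0 k) =
  kvertex s (lift ord_max k).
Proof.
move=> lt k; apply/ffunP => i; rewrite !ffunE permM lift_max lift0 rotRE /=.
have kl := ltn_ord k.
case: (eqVneq i (s.2^-1 ord_max)%g) => [->|ic].
  rewrite permKV eqxx inordK /=; last by have := ltn_ord (s.1 (s.2^-1 ord_max)%g); lia.
  have -> : (m < k) = false by apply/negbTE; rewrite -leqNgt -ltnS.
  by rewrite addn0 addn1; lia.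
have ri : s.2 i != ord_max by apply: contra ic => /eqP <-; rewrite permK.
by rewrite (negbTE ri).
Qed.

Lemma inner_vertex_bounds (j : 'I_m.+2) : j != ord0 -> j != ord_max -> 0 < j <= m.
Proof.
move=> j0 jm; apply/andP; split.
  by rewrite lt0n; apply: contra j0 => /eqP e; apply/eqP/val_inj.
have := ltn_ord j; rewrite ltnS leq_eqVlt => /orP[/eqP e|//].
by case/eqP: jm; apply/val_inj.
Qed.

Lemma kvertex_pivot_inner (s : ksimplex m.+1) (j : 'I_m.+2) :
  j != ord0 -> j != ord_max ->
  forall k, k != j -> kvertex (s.1, (s.2 * swap_adj j)%g) k = kvertex s k.
Proof.
move=> j0 jm k kj; have /andP[jp jl] := inner_vertex_bounds j0 jm.
apply/ffunP => i; rewrite !ffunE permM /=; congr (_ + nat_of_bool _).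
have kj' : (k : nat) != j by [].
rewrite /swap_adj; case: tpermP => [->|->|//]; rewrite !inordK; try lia;
  by apply/idP/idP; lia.
Qed.

Lemma door_pivot p : door (pivot p).1 (pivot p).2 = door p.1 p.2.
Proof.
case: p => s j; rewrite /pivot /=.
case: (eqVneq j ord0) => [->|j0] /=.
  case: ifP => // lt; rewrite /door; apply: eq_forallb => l; apply: eq_existsb => k.
  by rewrite kvertex_pivot_first.
case: (eqVneq j ord_max) => [->|jm] /=.
  case: ifP => // lt; rewrite /door; apply: eq_forallb => l; apply: eq_existsb => k.
  by rewrite kvertex_pivot_last.
rewrite /door; apply: eq_forallb => l; apply: eq_existsb => k.
by rewrite kvertex_pivot_inner // eq_sym neq_lift.
Qed.

Lemma pivot_door : {in doors, forall p, pivot p \in doors}.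
Proof. by move=> p; rewrite !inE door_pivot. Qed.

Lemma pivotK : involutive pivot.
Proof.
case=> -[b r] j; rewrite {2}/pivot /=.
case: (eqVneq j ord0) => [->|j0] /=.
  case: ifP => lt /=; last by rewrite /pivot /= lt.
  have ec : ((r * rotL)^-1 ord_max)%g = (r^-1 ord0)%g.
    apply: (@perm_inj _ (r * rotL)%g); rewrite permKV permM permKV.
    by apply: ord_inj; rewrite rotLE eqxx.
  by rewrite /pivot /= ec !ffunE !eqxx inordK //= incr_coordK // -mulgA rotLK mulg1.
case: (eqVneq j ord_max) => [->|jm] /=.
  case: ifP => lt /=; last by rewrite /pivot /= eqxx lt.
  have ec : ((r * rotR)^-1 ord0)%g = (r^-1 ord_max)%g.
    apply: (@perm_inj _ (r * rotR)%g); rewrite permKV permM permKV.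
    by apply: ord_inj; rewrite rotRE eqxx.
  have bc := ltn_ord (b (r^-1 ord_max)%g).
  rewrite /pivot /= ec !ffunE !eqxx inordK /=; last by lia.
  have -> : (b (r^-1 ord_max)%g).-1.+1 < N by lia.
  by rewrite decr_coordK // -mulgA rotRK mulg1.
rewrite /pivot /= (negbTE j0) (negbTE jm) -mulgA.
have -> : (swap_adj j * swap_adj j = 1)%g.
  by apply/permP => x; rewrite permM perm1 tpermK.
by rewrite mulg1.
Qed.

Definition ext0 (x : {ffun 'I_m -> nat}) : {ffun 'I_m.+1 -> nat} :=
  [ffun i => if unlift ord_max i is Some k then x k else 0].

Definition face_lab (x : {ffun 'I_m -> nat}) := lab (ext0 x).

Definition lift_simplex (s0 : ksimplex m) : ksimplex m.+1 :=
  ([ffun i => if unlift ord_max i is Some k then s0.1 k else ord0],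
   lift_perm ord_max ord_max s0.2).

Lemma kvertex_lift_simplex s0 k :
  kvertex (lift_simplex s0) (lift ord_max k) = ext0 (kvertex s0 k).
Proof.
have bump_lt h (k' : nat) : k' < h -> bump h k' = k'.
  by move=> lt; rewrite /bump leqNgt lt.
apply/ffunP => i; rewrite !ffunE /=.
case: (unliftP ord_max i) => [i' ->|->] /=; rewrite ?ffunE.
  by rewrite lift_perm_lift lift_max bump_lt.
rewrite lift_perm_id bump_lt //=.
by have := ltn_ord k; rewrite ltnS leqNgt => /negbTE ->.
Qed.

Lemma ext0_in_grid x : in_grid x -> in_grid (ext0 x).
Proof. by move=> g i; rewrite ffunE; case: unlift. Qed.

Lemma face_lab_sperner : sperner_labelling face_lab.
Proof.
have [lab_le lab_low lab_high] := lab_sperner; split.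
- move=> x g; rewrite /face_lab; have := lab_le _ (ext0_in_grid g).
  rewrite leq_eqVlt => /orP[/eqP e|//].
  have := lab_low _ ord_max (ext0_in_grid g); rewrite ffunE unlift_none e.
  by rewrite eqxx => /(_ erefl).
- move=> x i g xi; have := lab_low _ (lift ord_max i) (ext0_in_grid g).
  by rewrite ffunE liftK lift_max; apply.
- move=> x i g xi; have := lab_high _ (lift ord_max i) (ext0_in_grid g).
  by rewrite ffunE liftK; apply.
Qed.

Lemma door_lift_simplex s0 :
  door (lift_simplex s0) ord_max = fully_labelled face_lab s0.
Proof.
apply: eq_forallb => l; apply: eq_existsb => k.
by rewrite kvertex_lift_simplex.
Qed.

Lemma lift_simplex_onto (s : ksimplex m.+1) :
  s.2 ord_max = ord_max -> s.1 ord_max = ord0 -> exists s0, lift_simplex s0 = s.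
Proof.
case: s => b r /= rm bm.
pose f k := odflt k (unlift ord_max (r (lift ord_max k))).
have rf k : r (lift ord_max k) = lift ord_max (f k).
  rewrite /f; case: (unliftP ord_max (r (lift ord_max k))) => [k' -> //|e].
  by move: e; rewrite -{2}rm => /perm_inj/eqP; rewrite eq_sym (negbTE (neq_lift _ _)).
have finj : injective f.
  by move=> k1 k2 e; apply: (@lift_inj _ ord_max); apply: (@perm_inj _ r); rewrite !rf e.
exists ([ffun k => b (lift ord_max k)], perm finj); congr (_, _).
  by apply/ffunP => i; rewrite !ffunE; case: (unliftP ord_max i) => [k ->|->];
    rewrite /= ?ffunE.
apply/permP => i; case: (unliftP ord_max i) => [k ->|->].
  by rewrite lift_perm_lift permE rf.
by rewrite lift_perm_id rm.
Qed.

Lemma door_first_pivots s : door s ord0 -> (s.1 (s.2^-1 ord0)%g).+1 < N.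
Proof.
have [_ _ lab_high] := lab_sperner; set c := (s.2^-1 ord0)%g => D.
rewrite ltnNge; apply/negP => high.
have /existsP[k /eqP e] := (forallP D) ord0.
suff : kvertex s (lift ord0 k) c = N.
  by move/(lab_high _ _ (kvertex_in_grid _ _)); rewrite e.
rewrite ffunE permKV; have := ltn_ord (s.1 c); rewrite addn1; lia.
Qed.

Lemma door_last_on_face s :
  door s ord_max -> s.1 (s.2^-1 ord_max)%g = 0 :> nat -> (s.2^-1 ord_max)%g = ord_max.
Proof.
have [_ lab_low _] := lab_sperner; set c := (s.2^-1 ord_max)%g => D bc.
apply/eqP; apply/negPn/negP => cm.
have cl : c.+1 < m.+1.
  have := ltn_ord c; rewrite ltnS leq_eqVlt => /orP[/eqP e|//].
  by case/negP: cm; apply/eqP/ord_inj.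
have /existsP[k /eqP e] := (forallP D) (Ordinal cl).
suff : kvertex s (lift ord_max k) c = 0.
  by move/(lab_low _ _ (kvertex_in_grid _ _)); rewrite e eqxx.
rewrite ffunE permKV bc lift_max /=.
by have := ltn_ord k; rewrite ltnNge => /negbTE ->.
Qed.

Lemma pivot_inner_moves s (j : 'I_m.+2) :
  j != ord0 -> j != ord_max -> pivot (s, j) != (s, j).
Proof.
move=> j0 jm; case: s => b r; rewrite /pivot /= (negbTE j0) (negbTE jm).
apply/eqP => -[e]; have /andP[jp jl] := inner_vertex_bounds j0 jm.
have := congr1 (fun q : {perm _} => q (r^-1 (inord j.-1))%g) e.
rewrite permM permKV /swap_adj tpermL => /(congr1 val).
by rewrite /= !inordK; lia.
Qed.

(* lift_simplex embeds the triangulation of the face x_m = 0; the labelling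
   rules out doors in the other faces of the boundary, where pivot stops. *)
Lemma pivot_fixed : [set p in doors | pivot p == p] =
  [set (lift_simplex s0, ord_max) | s0 in [set s0 | fully_labelled face_lab s0]].
Proof.
apply/setP => -[s j]; rewrite !inE /=; apply/idP/imsetP.
  case/andP => D; case: (eqVneq j ord0) => [ej|j0].
    rewrite ej in D *; rewrite /pivot /= ?eqxx door_first_pivots //.
    by case/eqP.
  case: (eqVneq j ord_max) => [ej|jm]; last by rewrite (negbTE (pivot_inner_moves s j0 jm)).
  rewrite ej in D *; rewrite /pivot /= ?eqxx /=; case: ifPn => [_ /eqP [] //|].
  rewrite lt0n negbK => /eqP bc _.
  have cm := door_last_on_face D bc.
  have [s0 Es0] : exists s0, lift_simplex s0 = s.
    apply: lift_simplex_onto; first by rewrite -{1}cm permKV.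
    by apply: ord_inj; rewrite -cm bc.
  by exists s0; rewrite ?inE -?door_lift_simplex Es0.
case=> s0; rewrite inE -door_lift_simplex => D [-> ->]; rewrite D /pivot /= ?eqxx.
have -> : ((lift_perm ord_max ord_max s0.2)^-1 ord_max)%g = ord_max.
  by apply: (@perm_inj _ (lift_perm ord_max ord_max s0.2)); rewrite permKV lift_perm_id.
by rewrite ffunE unlift_none.
Qed.

Lemma lift_simplex_inj : injective lift_simplex.
Proof.
move=> [b1 r1] [b2 r2] [eb er]; congr (_, _).
  apply/ffunP => k; have := congr1 (fun f : {ffun _ -> _} => f (lift ord_max k)) eb.
  by rewrite /= !ffunE liftK.
apply/permP => k; have := congr1 (fun f : {perm _} => f (lift ord_max k)) er.
by rewrite /= !lift_perm_lift => /lift_inj.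
Qed.

Lemma odd_fully_labelled_face :
  odd #|[set s | fully_labelled lab s]| = odd #|[set s0 | fully_labelled face_lab s0]|.
Proof.
rewrite -card_door_swap_fixed -odd_card_involution; last exact: door_swapK.
  rewrite (odd_card_involution pivot_door) ?pivot_fixed; last by move=> p _; exact: pivotK.
  by rewrite card_imset // => s1 s2 /(congr1 fst) /lift_simplex_inj.
exact: door_swap_door.
Qed.

End DimensionStep.

Lemma odd_fully_labelled m (lab : {ffun 'I_m -> nat} -> nat) :
  sperner_labelling lab -> odd #|[set s | fully_labelled lab s]|.
Proof.
elim: m lab => [|m IH] lab lab_sperner; last first.
  by rewrite odd_fully_labelled_face //; exact: IH _ (face_lab_sperner lab_sperner).
have [lab_le _ _] := lab_sperner.
have -> : [set s | fully_labelled lab s] = [set: ksimplex 0].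
  apply/setP => s; rewrite !inE; apply/forallP => l; apply/existsP; exists ord0.
  have := lab_le _ (kvertex_in_grid s ord0); rewrite leqn0 => /eqP ->.
  by case: l => -[|l].
by rewrite cardsT card_prod card_ffun card_Sn !card_ord.
Qed.

Theorem kuhn m (lab : {ffun 'I_m -> nat} -> nat) :
  sperner_labelling lab -> exists s : ksimplex m, fully_labelled lab s.
Proof.
by move=> /odd_fully_labelled/odd_gt0/card_gt0P[s]; rewrite inE; exists s.
Qed.

End KuhnTriangulation.

(** * Brouwer's fixed point theorem on the cube *)

Local Open Scope ring_scope.
Local Open Scope classical_set_scope.

Section SequentialCompactness.
Variable R : realType.

Lemma increasing_seq_ge (phi : nat -> nat) : increasing_seq phi -> forall n, (n <= phi n)%N.
Proof.
move=> inc; elim=> // n IH.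
have : (phi n < phi n.+1)%N by have := inc n.+1 n; rewrite leEnat ltnn ltnNge => ->.
exact: leq_ltn_trans IH.
Qed.

Lemma cvg_subseq (u : nat -> R) (l : R) (phi : nat -> nat) : increasing_seq phi ->
  u n @[n --> \oo] --> l -> u (phi n) @[n --> \oo] --> l.
Proof.
move=> inc ul; apply: cvg_comp ul => A [N _ NA]; exists N => // n Nn.
by apply: NA; rewrite /= (leq_trans Nn) ?increasing_seq_ge.
Qed.

Lemma cvg_close (u v : nat -> R) (l : R) :
  (forall n, `|v n - u n| <= n.+1%:R^-1) ->
  u n @[n --> \oo] --> l -> v n @[n --> \oo] --> l.
Proof.
move=> uv; apply: cvg_sub0; apply: norm_cvg0.
apply: (squeeze_cvgr _ (cvg_cst 0) cvg_harmonic).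
by apply: nearW => n; rewrite normr_ge0 uv.
Qed.

Definition in_cube M (x : 'I_M -> R) := forall i, 0 <= x i <= 1.

Lemma bolzano_weierstrass_cube M (u : nat -> 'I_M -> R) : (forall n, in_cube (u n)) ->
  exists2 phi : nat -> nat, increasing_seq phi &
    exists p : 'I_M -> R, forall i, u (phi n) i @[n --> \oo] --> p i.
Proof.
move=> u_cube.
suff [phi inc cv] : exists2 phi : nat -> nat, increasing_seq phi &
    forall i, i \in enum 'I_M -> cvgn (fun n => u (phi n) i).
  exists phi => //; exists (fun i => lim (u (phi n) i @[n --> \oo])) => i.
  by apply: cv; rewrite mem_enum.
elim: (enum 'I_M) => [|i s [phi inc IH]]; first by exists id.
have bounded : bounded_fun (fun n => u (phi n) i).
  exists 1; split => // r r1 x _ /=; have /andP[x0 x1] := u_cube (phi x) i.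
  by rewrite ger0_norm //; exact: le_trans x1 (ltW r1).
have [psi inc2 c] := bolzano_weierstrass bounded.
exists (phi \o psi) => [n m /=|k]; first by rewrite inc; exact: inc2.
rewrite in_cons => /orP[/eqP ->//|ks].
have /cvg_ex[l hl] := IH k ks; apply/cvg_ex; exists l.
exact: (cvg_subseq (u := fun n => u (phi n) k)).
Qed.

End SequentialCompactness.

Section SequentialContinuity.
Variables (R : realType) (M : nat).
Implicit Types F G : ('I_M -> R) -> R.

Definition seq_continuous F :=
  forall (u : nat -> 'I_M -> R) (p : 'I_M -> R),
    (forall i, u n i @[n --> \oo] --> p i) -> F (u n) @[n --> \oo] --> F p.

Lemma seq_continuous_ext F G : (forall y, F y = G y) ->
  seq_continuous F -> seq_continuous G.
Proof. by move=> FG cF u p up; under eq_cvg do rewrite -FG; rewrite -FG; exact: cF. Qed.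

Lemma seq_continuous_cst (c : R) : seq_continuous (fun => c).
Proof. by move=> u p _; exact: cvg_cst. Qed.

Lemma seq_continuous_coord k : seq_continuous (fun y => y k).
Proof. by move=> u p; apply. Qed.

Lemma seq_continuousD F G :
  seq_continuous F -> seq_continuous G -> seq_continuous (fun y => F y + G y).
Proof. by move=> cF cG u p up; apply: cvgD; [exact: cF|exact: cG]. Qed.

Lemma seq_continuousM F G :
  seq_continuous F -> seq_continuous G -> seq_continuous (fun y => F y * G y).
Proof. by move=> cF cG u p up; apply: cvgM; [exact: cF|exact: cG]. Qed.

Lemma seq_continuousN F : seq_continuous F -> seq_continuous (fun y => - F y).
Proof. by move=> cF u p up; apply: cvgN; exact: cF. Qed.

Lemma seq_continuousV F : (forall y, F y != 0) ->
  seq_continuous F -> seq_continuous (fun y => (F y)^-1).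
Proof. by move=> F0 cF u p up; apply: cvgV; [exact: F0|exact: cF]. Qed.

Lemma seq_continuous_max F G :
  seq_continuous F -> seq_continuous G -> seq_continuous (fun y => Num.max (F y) (G y)).
Proof.
have maxE (a b : R) : Num.max a b = (a + b + `|a - b|) / 2.
  by case: (leP a b) => ab; [rewrite ler0_norm ?subr_le0 | rewrite gtr0_norm ?subr_gt0];
    lra.
move=> cF cG; apply: (seq_continuous_ext (fun y => esym (maxE (F y) (G y)))).
apply: seq_continuousM; last exact: seq_continuous_cst.
apply: (seq_continuousD (seq_continuousD cF cG)) => u p up; apply: cvg_norm.
exact: (seq_continuousD cF (seq_continuousN cG)).
Qed.

Lemma seq_continuous_sum (I : Type) (r : seq I) (P : pred I) (G : I -> ('I_M -> R) -> R) :
  (forall i, seq_continuous (G i)) -> seq_continuous (fun y => \sum_(i <- r | P i) G i y).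
Proof.
move=> cG u p up; elim: r => [|i r IH].
  by rewrite big_nil; under eq_cvg do rewrite big_nil; exact: cvg_cst.
rewrite big_cons; under eq_cvg do rewrite big_cons.
by case: ifPn => _ //; apply: cvgD => //; exact: cG.
Qed.

Lemma seq_continuous_prod (I : Type) (r : seq I) (P : pred I) (G : I -> ('I_M -> R) -> R) :
  (forall i, seq_continuous (G i)) -> seq_continuous (fun y => \prod_(i <- r | P i) G i y).
Proof.
move=> cG u p up; elim: r => [|i r IH].
  by rewrite big_nil; under eq_cvg do rewrite big_nil; exact: cvg_cst.
rewrite big_cons; under eq_cvg do rewrite big_cons.
by case: ifPn => _ //; apply: cvgM => //; exact: cG.
Qed.

End SequentialContinuity.

Section Brouwer.
Variables (R : realType) (M : nat).
Variable f : ('I_M -> R) -> 'I_M -> R.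
Hypothesis f_cube : forall x, in_cube x -> in_cube (f x).
Hypothesis f_cont : forall i, seq_continuous (fun x => f x i).

Definition grid_point K (x : {ffun 'I_M -> nat}) : 'I_M -> R :=
  fun k => (x k)%:R / K.+1%:R.

Lemma grid_point_cube K x : in_grid K x -> in_cube (grid_point K x).
Proof.
move=> g k; rewrite /grid_point divr_ge0 ?ler0n //= ler_pdivrMr ?ltr0Sn // mul1r.
by rewrite ler_nat; exact: g.
Qed.

Definition brouwer_label K (x : {ffun 'I_M -> nat}) : nat :=
  if [pick i | (0 < x i)%N && (f (grid_point K x) i <= grid_point K x i)] is Some i
  then i.+1 else 0.

Lemma brouwer_label_sperner K : sperner_labelling K (brouwer_label K).
Proof.
split.
- by move=> x _; rewrite /brouwer_label; case: pickP => // i _; exact: ltn_ord.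
- move=> x i _ xi; rewrite /brouwer_label; case: pickP => // i' /andP[h _].
  by apply/eqP => -[e]; move: h; rewrite (_ : i' = i) ?xi //; apply: ord_inj.
- move=> x i g xi; rewrite /brouwer_label; case: pickP => // /(_ i) /=.
  have /andP[_ h] := f_cube (grid_point_cube g) i.
  by rewrite xi ltn0Sn /= /grid_point xi divff ?pnatr_eq0 // h.
Qed.

Lemma brouwer_label0 K x : in_grid K x -> brouwer_label K x = 0 ->
  forall k, grid_point K x k <= f (grid_point K x) k.
Proof.
rewrite /brouwer_label => g; case: pickP => // nolab _ k.
have /= := nolab k; case: (posnP (x k)) => [xk _|xk /negbT].
  by rewrite {1}/grid_point xk mul0r; have /andP[] := f_cube (grid_point_cube g) k.
by rewrite -ltNge => /ltW.
Qed.

Lemma brouwer_labelS K x (i : 'I_M) : brouwer_label K x = i.+1 ->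
  f (grid_point K x) i <= grid_point K x i.
Proof.
rewrite /brouwer_label; case: pickP => // i' /andP[_ h] [e].
by rewrite (_ : i = i') //; apply: ord_inj.
Qed.

Lemma kvertex_close K (s : ksimplex K M) j j' k :
  `|grid_point K (kvertex s j) k - grid_point K (kvertex s j') k| <= K.+1%:R^-1.
Proof.
rewrite /grid_point !ffunE /= -mulrBl normrM [`|_^-1|]ger0_norm ?invr_ge0 ?ler0n //.
rewrite ler_piMl ?invr_ge0 ?ler0n // !natrD opprD addrACA subrr add0r.
by case: (s.2 k < j)%N; case: (s.2 k < j')%N;
  rewrite /= ?subrr ?subr0 ?sub0r ?normrN ?normr0 ?normr1.
Qed.

Lemma approx_fixed_point K : exists v : 'I_M.+1 -> 'I_M -> R,
  [/\ forall l, in_cube (v l),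
      forall l l' k, `|v l k - v l' k| <= K.+1%:R^-1,
      forall k, v ord0 k <= f (v ord0) k &
      forall i, f (v (lift ord0 i)) i <= v (lift ord0 i) i].
Proof.
have [s /forallP full] := kuhn (brouwer_label_sperner K).
have /choice[jl jlP] : forall l : 'I_M.+1, exists j, brouwer_label K (kvertex s j) = l.
  by move=> l; have /existsP[j /eqP e] := full l; exists j.
exists (fun l => grid_point K (kvertex s (jl l))); split.
- by move=> l; exact: grid_point_cube (kvertex_in_grid s _).
- by move=> l l' k; exact: kvertex_close.
- exact: brouwer_label0 (kvertex_in_grid s _) (jlP ord0).
- by move=> i; apply: brouwer_labelS; rewrite jlP.
Qed.

Theorem brouwer_cube : exists2 x, in_cube x & forall i, f x i = x i.
Proof.
have [v vP] := choice approx_fixed_point.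
have v_cube K : in_cube (v K ord0) by have [] := vP K.
have [phi inc [p vp]] := bolzano_weierstrass_cube v_cube.
have cv l k : v (phi n) l k @[n --> \oo] --> p k.
  apply: (cvg_close _ (vp k)) => n; have [_ close _ _] := vP (phi n).
  apply: le_trans (close l ord0 k) _.
  by rewrite lef_pV2 ?posrE ?ltr0Sn // ler_nat ltnS increasing_seq_ge.
exists p => k.
  apply/andP; split.
    apply: (ler_cvg_to (cvg_cst 0) (vp k)); apply: nearW => n.
    by have /andP[] := v_cube (phi n) k.
  apply: (ler_cvg_to (vp k) (cvg_cst (1 : R))); apply: nearW => n.
  by have /andP[] := v_cube (phi n) k.
have fcv l : f (v (phi n) l) k @[n --> \oo] --> f p k.
  exact: (@f_cont k (fun n => v (phi n) l) p (cv l)).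
apply/le_anti/andP; split.
  apply: (ler_cvg_to (fcv (lift ord0 k)) (cv (lift ord0 k) k)).
  by apply: nearW => n; have [_ _ _ ->] := vP (phi n).
apply: (ler_cvg_to (cv ord0 k) (fcv ord0)); apply: nearW => n.
by have [_ _ -> _] := vP (phi n).
Qed.

End Brouwer.

(** * Nash equilibria *)

Lemma mixed_support (R : realType) (T : finType) (x : {ffun T -> R}) :
  mixed x -> exists a, 0 < x a.
Proof.
case=> x_ge0 x1; case: (pickP (fun a => 0 < x a)) => [a xa|no_supp]; first by exists a.
move: x1; rewrite big1 => [/esym/eqP|a _]; first by rewrite oner_eq0.
by apply/eqP; rewrite eq_le x_ge0 andbT leNgt no_supp.
Qed.

Section Gains.
Variables (R : realType) (n : nat) (S : 'I_n -> finType) (P : payoff R S).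
Implicit Types sg : profile R S.

Definition pure j (a : S j) : {ffun S j -> R} := [ffun b => (b == a)%:R].

Lemma EUdev_pure sg j (tau : {ffun S j -> R}) :
  EUdev P sg tau = \sum_(a : S j) tau a * EUdev P sg (pure a).
Proof.
rewrite /EUdev; under [RHS]eq_bigr do rewrite mulr_sumr.
rewrite exchange_big /=; apply: eq_bigr => s _.
rewrite [RHS](bigD1 (s j)) //= [X in _ + X]big1 ?addr0.
  by rewrite ffunE eqxx mul1r mulrA.
by move=> a ne; rewrite ffunE eq_sym (negbTE ne) !mul0r mulr0.
Qed.

Lemma EU_EUdev sg j : EU P sg j = EUdev P sg (sg j).
Proof. by apply: eq_bigr => s _; rewrite (bigD1 j). Qed.

Definition gain sg i (a : S i) := EUdev P sg (pure a) - EU P sg i.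

Lemma sum_weighted_gain sg i : \sum_a sg i a = 1 -> \sum_a sg i a * gain sg a = 0.
Proof.
move=> sg1; under eq_bigr do rewrite mulrBr.
by rewrite sumrB -EUdev_pure -EU_EUdev -mulr_suml sg1 mul1r subrr.
Qed.

Lemma Nash_no_gain sg : is_profile sg ->
  (forall i (a : S i), gain sg a <= 0) -> Nash P sg.
Proof.
move=> prof no_gain; split => // j tau [tau_ge0 tau1]; rewrite EUdev_pure.
apply: le_trans (_ : \sum_(a : S j) tau a * EU P sg j <= _).
  by apply: ler_sum => a _; rewrite ler_wpM2l // -subr_le0; exact: no_gain.
by rewrite -mulr_suml tau1 mul1r.
Qed.

Definition gain_pos sg i (a : S i) := Num.max 0 (gain sg a).

Lemma gain_pos_ge0 sg i (a : S i) : 0 <= gain_pos sg a.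
Proof. by rewrite le_max lexx. Qed.

Lemma nash_update_den_gt0 sg i : 0 < 1 + \sum_(b : S i) gain_pos sg b.
Proof. by rewrite ltr_wpDr // sumr_ge0 // => b _; exact: gain_pos_ge0. Qed.

Definition nash_update sg i (a : S i) :=
  (sg i a + gain_pos sg a) / (1 + \sum_(b : S i) gain_pos sg b).

Lemma nash_update_sum sg i : \sum_a sg i a = 1 -> \sum_(a : S i) nash_update sg a = 1.
Proof.
move=> sg1; rewrite -mulr_suml big_split /= sg1 divff //.
by rewrite gt_eqF // nash_update_den_gt0.
Qed.

Lemma nash_update_fixed_gain sg i (a : S i) : nash_update sg a = sg i a ->
  sg i a * \sum_(b : S i) gain_pos sg b = gain_pos sg a.
Proof.
rewrite /nash_update => /(congr1 (fun x => x * (1 + \sum_(b : S i) gain_pos sg b))).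
rewrite divfK ?gt_eqF ?nash_update_den_gt0 // mulrDr mulr1 => e.
exact: (addrI _ (esym e)).
Qed.

(* If the total positive gain G were positive, every strategy a in the
   support would gain, its positive gain being sg a * G; but the average
   gain over the support is zero. *)
Lemma nash_update_fixed_no_gain sg : is_profile sg ->
  (forall i (a : S i), nash_update sg a = sg i a) -> forall i (a : S i), gain sg a <= 0.
Proof.
move=> prof fixed i a; have [sg_ge0 sg1] := prof i.
suff G0 : \sum_(b : S i) gain_pos sg b = 0.
  have /eqP := @psumr_eq0P _ _ _ _ (fun b _ => gain_pos_ge0 sg b) G0 a isT.
  by rewrite eq_le ge_max lexx => /andP[].
apply/eqP; rewrite eq_le sumr_ge0 ?andbT => [|b _]; last exact: gain_pos_ge0.
rewrite leNgt; apply/negP => G_gt0.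
have gain_supp b : 0 < sg i b -> 0 < sg i b * gain sg b.
  move=> b_gt0; rewrite mulr_gt0 //.
  have : 0 < gain_pos sg b by rewrite -nash_update_fixed_gain ?mulr_gt0.
  by rewrite lt_max ltxx.
have [b0 b0_gt0] := mixed_support (prof i).
have : 0 < \sum_b sg i b * gain sg b.
  rewrite (bigD1 b0) //=; apply: ltr_wpDr (gain_supp _ b0_gt0).
  apply: sumr_ge0 => b _; have := sg_ge0 b; rewrite le_eqVlt => /orP[/eqP <-|].
    by rewrite mul0r.
  by move/gain_supp/ltW.
by rewrite sum_weighted_gain // ltxx.
Qed.

End Gains.

Arguments pure {R n S j}.

Section GainContinuity.
Variables (R : realType) (n : nat) (S : 'I_n -> finType) (P : payoff R S) (M : nat).
Variable sgf : ('I_M -> R) -> profile R S.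
Hypothesis sgf_cont : forall i (a : S i), seq_continuous (fun y => sgf y i a).

Lemma seq_continuous_EU j : seq_continuous (fun y => EU P (sgf y) j).
Proof.
apply: seq_continuous_sum => s; apply: seq_continuousM; last exact: seq_continuous_cst.
by apply: seq_continuous_prod => i; exact: sgf_cont.
Qed.

Lemma seq_continuous_EUdev_pure j (a : S j) :
  seq_continuous (fun y => EUdev P (sgf y) (pure a)).
Proof.
apply: seq_continuous_sum => s; apply: seq_continuousM; last exact: seq_continuous_cst.
apply: seq_continuousM; first exact: seq_continuous_cst.
by apply: seq_continuous_prod => i; exact: sgf_cont.
Qed.

Lemma seq_continuous_gain_pos i (a : S i) :
  seq_continuous (fun y => gain_pos P (sgf y) a).
Proof.
apply: seq_continuous_max; first exact: seq_continuous_cst.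
apply: seq_continuousD; first exact: seq_continuous_EUdev_pure.
by apply: seq_continuousN; exact: seq_continuous_EU.
Qed.

Lemma seq_continuous_nash_update i (a : S i) :
  seq_continuous (fun y => nash_update P (sgf y) a).
Proof.
apply: seq_continuousM.
  by apply: seq_continuousD; [exact: sgf_cont|exact: seq_continuous_gain_pos].
apply: seq_continuousV => [y|]; first by rewrite gt_eqF // nash_update_den_gt0.
apply: seq_continuousD; first exact: seq_continuous_cst.
by apply: seq_continuous_sum => b; exact: seq_continuous_gain_pos.
Qed.

End GainContinuity.

Section NashExistence.
Variables (R : realType) (n : nat) (S : 'I_n -> finType) (P : payoff R S).
Hypothesis S_nonempty : forall i, (0 < #|S i|)%N.

Local Notation strategy := {i : 'I_n & S i}.
Local Notation M := #|{: strategy}|.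
Implicit Types y : 'I_M -> R.

Definition coord y i (a : S i) : R := y (enum_rank (Tagged (fun j => S j) a)).

Definition coord_sum y i := \sum_(a : S i) coord y a.

Definition mass y i := Num.max 1 (coord_sum y i).

Lemma mass_gt0 y i : 0 < mass y i.
Proof. by rewrite lt_max ltr01. Qed.

(* A continuous retraction of the cube onto the mixed profiles: rescale the
   block of player i when its mass exceeds 1, and spread the missing mass
   uniformly otherwise. *)
Definition retract y : profile R S := fun i =>
  [ffun a => coord y a / mass y i + (1 - coord_sum y i / mass y i) / #|S i|%:R].

Lemma retract_sum y i : \sum_a retract y i a = 1.
Proof.
under eq_bigr do rewrite ffunE.
rewrite big_split /= -mulr_suml sumr_const -[_ *+ _]mulr_natr -/(coord_sum y i).
have S0 : #|S i|%:R != 0 :> R by rewrite pnatr_eq0 -lt0n.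
by rewrite divfK // addrC subrK.
Qed.

Lemma retract_profile y : in_cube y -> is_profile (retract y).
Proof.
move=> y_cube i; split=> [a|]; last exact: retract_sum.
have y_ge0 : 0 <= coord y a.
  by have /andP[] := y_cube (enum_rank (Tagged (fun j => S j) a)).
rewrite ffunE addr_ge0 ?divr_ge0 ?(ltW (mass_gt0 y i)) ?ler0n //.
by rewrite subr_ge0 ler_pdivrMr ?mass_gt0 // mul1r le_max lexx orbT.
Qed.

Lemma retract_id y i : coord_sum y i = 1 -> forall a, retract y i a = coord y a.
Proof. by move=> y1 a; rewrite ffunE /mass y1 maxxx invr1 !mulr1 subrr mul0r addr0. Qed.

Lemma seq_continuous_retract i (a : S i) : seq_continuous (fun y => retract y i a).
Proof.
have cont_sum : seq_continuous (fun y => coord_sum y i).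
  by apply: seq_continuous_sum => b; exact: seq_continuous_coord.
have cont_mass : seq_continuous (fun y => (mass y i)^-1).
  apply: seq_continuousV => [y|]; first by rewrite gt_eqF ?mass_gt0.
  by apply: seq_continuous_max; [exact: seq_continuous_cst|].
apply: (seq_continuous_ext (fun y => esym (ffunE _ a))).
apply: seq_continuousD; first by apply: seq_continuousM => //; exact: seq_continuous_coord.
apply: seq_continuousM; last exact: seq_continuous_cst.
apply: seq_continuousD; first exact: seq_continuous_cst.
exact: seq_continuousN (seq_continuousM _ _).
Qed.

Definition nash_map y (k : 'I_M) : R := nash_update P (retract y) (tagged (enum_val k)).

Lemma nash_map_coord y i (a : S i) :
  nash_map y (enum_rank (Tagged (fun j => S j) a)) = nash_update P (retract y) a.
Proof. by rewrite /nash_map enum_rankK. Qed.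

Lemma nash_map_cube y : in_cube y -> in_cube (nash_map y).
Proof.
move=> y_cube k; rewrite /nash_map; set i := tag _; set a := tagged _.
have [sg_ge0 sg1] := retract_profile y_cube i.
have gain_ge0 b : 0 <= gain_pos P (retract y) b by exact: gain_pos_ge0.
apply/andP; split.
  by apply: divr_ge0; [exact: addr_ge0|exact/ltW/nash_update_den_gt0].
rewrite ler_pdivrMr ?nash_update_den_gt0 // mul1r lerD //.
  by rewrite -sg1 (bigD1 a) //= lerDl sumr_ge0.
by rewrite (bigD1 a) //= lerDl sumr_ge0.
Qed.

Lemma nash_map_fixed y : in_cube y -> (forall k, nash_map y k = y k) ->
  Nash P (retract y).
Proof.
move=> y_cube fixed; have prof := retract_profile y_cube.
have upd i (a : S i) : nash_update P (retract y) a = coord y a.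
  by rewrite -nash_map_coord fixed.
have y1 i : coord_sum y i = 1.
  by rewrite /coord_sum -(nash_update_sum P (retract_sum y i)); apply: eq_bigr => a _.
apply: Nash_no_gain => //; apply: nash_update_fixed_no_gain => // i a.
by rewrite retract_id ?upd.
Qed.

Theorem nash_exists : exists sg, Nash P sg.
Proof.
have cont k : seq_continuous (fun y => nash_map y k).
  exact: seq_continuous_nash_update seq_continuous_retract _ _.
have [y y_cube fixed] := brouwer_cube nash_map_cube cont.
by exists (retract y); exact: nash_map_fixed.
Qed.

End NashExistence.

(** * The adaptation procedure *)

Section NaturalMisinformedEquilibria.
Variables (R : realType) (n : nat) (S : 'I_n -> finType) (g : mgame R S).

Lemma NME_support sg : NME g sg -> exists v, chi sg v.
Proof.
move=> N; have supp i : exists a, 0 < sg i a.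
  by have [tau [[prof _] <-]] := N i; exact: mixed_support.
exists (finfun (fun i => xchoose (supp i))) => i.
by rewrite ffunE; exact: (xchooseP (supp i)).
Qed.

Lemma NME_exists : (forall i, (0 < #|S i|)%N) -> exists sg, NME g sg.
Proof.
move=> S_nonempty; have /choice[tau tauP] : forall i, exists tau, Nash (subj g i) tau.
  by move=> i; exact: nash_exists.
by exists (fun i => tau i i) => i; exists (tau i).
Qed.

End NaturalMisinformedEquilibria.

Section AdaptationProcedure.
Variables (R : realType) (n : nat) (S : 'I_n -> finType).
Implicit Types (g h : mgame R S) (M : gset R S).

Lemma ADnS t M : ADn t.+1 M = AD (ADn t M).
Proof. by elim: t M => // t IH M; rewrite -[ADn t.+2 M]/(ADn t.+1 (AD M)) IH. Qed.

Lemma ADnS_edge t M g : ADn t.+1 M g <-> exists2 h, ADn t M h & edge h g.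
Proof.
rewrite ADnS; split; first by case=> h [sg [v [Mh N c e]]]; exists h => //; exists sg, v.
by case=> h Mh [sg [v [N c e]]]; exists h, sg, v.
Qed.

Lemma AD_single_edge g h : AD (single g) h <-> edge g h.
Proof.
split; first by case=> g' [sg [v [-> N c e]]]; exists sg, v.
by case=> sg [v [N c e]]; exists g, sg, v.
Qed.

Lemma AD_set_eq M1 M2 : set_eq M1 M2 -> set_eq (AD M1) (AD M2).
Proof.
by move=> E g; split; case=> h [sg [v [Mh N c e]]]; exists h, sg, v; split => //; apply/E.
Qed.

Definition agreed g := [set v : pos S | [forall i, subj g i v == actual g v]].

Lemma adapt_agreed g v : v \in agreed g -> adapt g v = g.
Proof.
rewrite inE => /forallP gv; case: g gv => a s gv; rewrite /adapt /=; congr MGame.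
apply/ffunP => i; rewrite ffunE; apply/ffunP => w; rewrite ffunE.
by case: eqP => // ->; apply/esym/eqP; exact: gv.
Qed.

Lemma agreed_adapt g v : v \notin agreed g -> (#|agreed g| < #|agreed (adapt g v)|)%N.
Proof.
move=> gv; apply: proper_card; apply/properP; split.
  apply/fintype.subsetP => w; rewrite !inE => /forallP gw; apply/forallP => i.
  by rewrite /adapt /= !ffunE; case: (eqVneq w v) => [->|_] //; exact: gw.
by exists v => //; rewrite inE; apply/forallP => i; rewrite /adapt /= !ffunE eqxx.
Qed.

Lemma edge_agreed g h : edge h g -> g = h \/ (#|agreed h| < #|agreed g|)%N.
Proof.
case=> sg [v [_ _ ->]]; case: (boolP (v \in agreed h)) => hv.
  by left; exact: adapt_agreed.
by right; exact: agreed_adapt.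
Qed.

Variable g0 : mgame R S.
Local Notation A t := (ADn t (single g0)).

(* A path of length t from g0 either makes t proper steps, each of which
   enlarges the agreed set, or it passes through a self-loop, which can be
   traversed once more or once less. *)
Lemma ADn_succ_or_far t g : A t g -> (#|agreed g0| + t <= #|agreed g|)%N \/ A t.+1 g.
Proof.
elim: t g => [g /= ->|t IH g /ADnS_edge[h Ah e]]; first by left; rewrite addn0.
have [far|Ah'] := IH h Ah; last by right; apply/ADnS_edge; exists h.
case: (edge_agreed e) => [eg|lt]; last by left; rewrite addnS; exact: leq_ltn_trans far lt.
by right; apply/ADnS_edge; exists g; [apply/ADnS_edge; exists h | move: e; rewrite eg].
Qed.

Lemma ADn_pred_or_far t g : A t.+1 g -> (#|agreed g0| + t.+1 <= #|agreed g|)%N \/ A t g.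
Proof.
elim: t g => [|t IH] g /ADnS_edge[h Ah e].
  by case: (edge_agreed e) => [->|lt]; [right|left; rewrite addn1; move: Ah => /= <-].
have [far|Ah'] := IH h Ah; last by right; apply/ADnS_edge; exists h.
case: (edge_agreed e) => [->|lt]; first by right.
by left; rewrite addnS; exact: leq_ltn_trans far lt.
Qed.

Lemma ADn_stable t : (#|pos S| < t)%N -> set_eq (A t.+1) (A t).
Proof.
move=> lt g; have le : (#|agreed g| <= #|pos S|)%N := max_card _; split.
  by case/ADn_pred_or_far => // far; lia.
by case/ADn_succ_or_far => // far; lia.
Qed.

Lemma ADn_stable_from L : set_eq (A L.+1) (A L) -> forall k, set_eq (A (L + k)%N) (A L).
Proof.
move=> E; elim=> [|k IH]; first by rewrite addn0.
rewrite addnS => g; rewrite ADnS; split.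
  by move/(AD_set_eq IH g); rewrite -ADnS; move/E.
by move/E; rewrite ADnS; move/(AD_set_eq IH g).
Qed.

Lemma length_exists : exists L, is_length (single g0) L.
Proof.
suff : forall t, set_eq (A t.+1) (A t) -> exists L, is_length (single g0) L.
  by apply; apply: (@ADn_stable #|pos S|.+1).
elim/ltn_ind => t IH At.
case: (pselect (exists2 t', (t' < t)%N & set_eq (A t'.+1) (A t'))) => [[t' lt At']|no].
  exact: IH lt At'.
by exists t; split => // t' lt At'; apply: no; exists t'.
Qed.

Lemma ADn_loop t g : A t g -> edge g g -> forall k, A (t + k)%N g.
Proof.
move=> Ag e; elim=> [|k IH]; first by rewrite addn0.
by rewrite addnS; apply/ADnS_edge; exists g.
Qed.

Lemma sink_adapt g sg v : sink g0 g -> NME g sg -> chi sg v -> adapt g v = g.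
Proof.
move=> [[t At] no_out] N c; apply: contrapT => moved; apply: no_out.
exists (adapt g v); split => //; last by exists sg, v.
by exists t.+1; apply/ADnS_edge; exists g => //; exists sg, v.
Qed.

Lemma sink_loop g sg : sink g0 g -> NME g sg -> edge g g.
Proof.
move=> sk N; have [v c] := NME_support N.
by exists sg, v; split => //; rewrite (sink_adapt sk N c).
Qed.

End AdaptationProcedure.

Theorem proposition19 (R : realType) (n : nat) (S : 'I_n -> finType)
    (g0 : mgame R S) (HS : forall i, (0 < #|S i|)%N) :
  (forall g, sink g0 g -> terminal g0 g) /\
  (forall g, sink g0 g -> forall sg, NME g sg -> stable g0 sg).
Proof.
split=> [g sk|g sk sg N].
  have [sg N] := NME_exists g HS.
  by split; [case: sk | apply/AD_single_edge; exact: sink_loop sk N].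
have [L length_L] := length_exists g0.
have [[t At] _] := sk.
exists g; split=> [|//|v]; last exact: sink_adapt sk N.
exists L; split=> //; apply/(ADn_stable_from (proj1 length_L) t).
by rewrite addnC; exact: ADn_loop At (sink_loop sk N) L.
Qed.
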